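(* Let $T$ be a tree with positive edge-lengths, let $\Sigma\subseteq V(T)$ be a set of sites and $s\in\Sigma$. For each vertex $v\in\mathrm{cell}_T(s,\Sigma)$, the path in $T$ from $s$ to $v$ is contained in the subgraph $T[\mathrm{cell}_T(s,\Sigma)]$ induced by $\mathrm{cell}_T(s,\Sigma)$. Likewise, for each $v\in \mathrm{cell}^<_T(s,\Sigma)$, the path in $T$ from $s$ to $v$ is contained in $T[\mathrm{cell}^<_T(s,\Sigma)]$.
   Context: $d_T$ is the shortest-path distance in $T$. For $s\in\Sigma$, $\mathrm{cell}_T(s,\Sigma)=\{x\in V(T)\mid d_T(s,x)\le d_T(s',x)\ \forall s'\in\Sigma\}$ and $\mathrm{cell}^<_T(s,\Sigma)=\{x\in V(T)\mid d_T(s,x)< d_T(s',x)\ \forall s'\in\Sigma\setminus\{s\}\}$. *)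

From HB Require Import structures.
From mathcomp Require Import all_boot all_order all_algebra.
From mathcomp Require Import classical_sets reals.
Set Implicit Arguments. Unset Strict Implicit. Unset Printing Implicit Defensive.
Import Order.TTheory GRing.Theory Num.Theory.
Local Open Scope ring_scope.
Local Open Scope classical_set_scope.

(* A (finite, simple, undirected) graph on a finType V is a symmetric,
   irreflexive relation e. Walks are ssreflect paths: x :: p with
   consecutive vertices adjacent. *)

Definition walk {V : finType} (e : rel V) (x y : V) (p : seq V) : bool :=
  path e x p && (last x p == y).

Definition connected_graph {V : finType} (e : rel V) : Prop :=
  forall x y : V, exists p : seq V, walk e x y p.

(* no cycle: no closed walk x :: p -> x on >= 3 distinct vertices *)
Definition acyclic {V : finType} (e : rel V) : Prop :=
  forall (x : V) (p : seq V),
    path e x p -> uniq (x :: p) -> (2 <= size p)%N -> ~~ e (last x p) x.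

Definition is_tree {V : finType} (e : rel V) : Prop :=
  symmetric e /\ irreflexive e /\ connected_graph e /\ acyclic e.

Definition pos_lengths {V : finType} {R : realType} (e : rel V)
  (w : V -> V -> R) : Prop :=
  (forall x y, w x y = w y x) /\ (forall x y, e x y -> 0 < w x y).

Definition wlen {V : finType} {R : realType} (w : V -> V -> R)
  (x : V) (p : seq V) : R :=
  \sum_(ab <- zip (x :: p) p) w ab.1 ab.2.

Definition dist {V : finType} {R : realType} (e : rel V) (w : V -> V -> R)
  (x y : V) : R :=
  inf [set wlen w x p | p in [set p : seq V | walk e x y p]].

Definition cell {V : finType} {R : realType} (e : rel V) (w : V -> V -> R)
  (Sigma : {set V}) (s : V) : {set V} :=
  [set x | [forall s', (s' \in Sigma) ==> (dist e w s x <= dist e w s' x)]].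

Definition cell_strict {V : finType} {R : realType} (e : rel V)
  (w : V -> V -> R) (Sigma : {set V}) (s : V) : {set V} :=
  [set x | [forall s', (s' \in Sigma :\ s) ==> (dist e w s x < dist e w s' x)]].

From HB Require Import structures.
From mathcomp Require Import all_boot all_order all_algebra.
From mathcomp Require Import classical_sets reals.
From mathcomp Require Import lra.
Import Order.TTheory GRing.Theory Num.Theory.
Local Open Scope ring_scope.

(* In a tree every walk from s to v passes through each vertex u of the simple
   path from s to v, so d(s,u) + d(u,v) <= d(s,v).  With the triangle
   inequality d(s',v) <= d(s',u) + d(u,v) this gives
   d(s,u) - d(s',u) <= d(s,v) - d(s',v) for every site s', so the (strict)
   advantage of s over s' at v persists at u. *)

Section TreePaths.
Set Implicit Arguments. Unset Strict Implicit.
Variables (V : finType) (e : rel V).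

Lemma walk_cat x y z p q : walk e x y p -> walk e y z q -> walk e x z (p ++ q).
Proof.
move=> /andP[pp /eqP lp] /andP[pq /eqP lq].
by rewrite /walk cat_path last_cat lp pp pq lq eqxx.
Qed.

Definition avoiding (u : V) : rel V := [rel x y | [&& e x y, x != u & y != u]].

Lemma path_avoiding u x p :
  x != u -> path (avoiding u) x p = path e x p && (u \notin p).
Proof.
elim: p x => [|y p IH] x xu //=.
rewrite /avoiding /= xu /=.
case: (eqVneq y u) => [->|yu]; first by rewrite mem_head !andbF.
by rewrite /= andbT -/(avoiding u) IH // inE negb_or eq_sym yu andbA.
Qed.

Lemma connect_avoiding u x p :
  u \notin x :: p -> path e x p -> connect (avoiding u) x (last x p).
Proof.
rewrite inE negb_or eq_sym => /andP[xu up] pp.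
by apply/connectP; exists p; rewrite ?path_avoiding ?pp.
Qed.

Hypothesis e_sym : symmetric e.
Hypothesis e_acyclic : acyclic e.

Lemma connect_sym_avoiding u : connect_sym (avoiding u).
Proof.
apply: sym_connect_sym => x y; rewrite /avoiding /= e_sym.
by case: (x != u); case: (y != u).
Qed.

Lemma neighbours_disconnected u a b :
  e u a -> e u b -> a != b -> ~~ connect (avoiding u) a b.
Proof.
move=> eua eub ab; apply/negP => /connectP[r0 pr0 lr0].
case/shortenP: pr0 lr0 => [[|c r] pr ur _ lr]; first by rewrite lr eqxx in ab.
have au : a != u by case/andP: pr => /and3P[].
rewrite path_avoiding // in pr; case/andP: pr => pr uc.
have epath : path e u [:: a, c & r] by rewrite /= eua.
have euniq : uniq [:: u, a, c & r].
  by rewrite /= inE negb_or eq_sym au uc; move: ur => /= ->.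
by have /negP[] := e_acyclic epath euniq isT; move: lr => /= <-; rewrite e_sym.
Qed.

Lemma tree_path_subset_walk s v p q :
  walk e s v p -> uniq (s :: p) -> walk e s v q -> {subset s :: p <= s :: q}.
Proof.
move=> /andP[pp /eqP lp] up /andP[pq /eqP lq] u up_u; apply/negPn/negP => uq.
have su : s != u by apply: contraNneq uq => <-; rewrite mem_head.
have vu : v != u by apply: contraNneq uq => <-; rewrite -lq mem_last.
have p_u : u \in p by move: up_u; rewrite inE eq_sym (negbTE su).
case/splitPr: p_u pp lp up => p1 [|b p2].
  by rewrite last_cat /= => _ vu'; rewrite vu' eqxx in vu.
rewrite -cat_cons cat_uniq cat_path last_cat /=.
move=> /andP[pp1 /and3P[eau eub pp2]] lp.
case/and3P=> _ /norP[u_p1 /norP[b_p1 _]] /andP[u_b _].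
set a := last s p1 in eau.
have a_p1 : a \in s :: p1 by apply: mem_last.
have ab : a != b by apply: contraNneq b_p1 => <-.
(* a ~ s ~ v ~ b is a walk between the two neighbours of u on p avoiding u *)
have /negP[] := neighbours_disconnected (etrans (e_sym u a) eau) eub ab.
have sa := connect_avoiding u_p1 pp1.
have sv := connect_avoiding uq pq; rewrite lq in sv.
have bv := connect_avoiding u_b pp2; rewrite lp in bv.
rewrite connect_sym_avoiding in sa; rewrite connect_sym_avoiding in bv.
exact: connect_trans (connect_trans sa sv) bv.
Qed.

End TreePaths.

Section Distance.
Set Implicit Arguments. Unset Strict Implicit.
Variables (R : realType) (V : finType) (e : rel V) (w : V -> V -> R).
Hypothesis w_ge0 : forall x y, e x y -> 0 <= w x y.
Hypothesis e_connected : connected_graph e.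

Lemma wlen_cat x p1 p2 :
  wlen w x (p1 ++ p2) = wlen w x p1 + wlen w (last x p1) p2.
Proof.
elim: p1 x => [|y p1 IH] x /=; first by rewrite /wlen /= big_nil add0r.
by rewrite /wlen /= !big_cons -/(wlen w y _) IH addrA.
Qed.

Lemma wlen_ge0 x p : path e x p -> 0 <= wlen w x p.
Proof.
elim: p x => [|y p IH] x /=; first by rewrite /wlen big_nil.
case/andP=> exy pp; rewrite /wlen big_cons -/(wlen w y _).
by rewrite addr_ge0 ?IH ?w_ge0.
Qed.

Lemma dist_le_wlen x y p : walk e x y p -> dist e w x y <= wlen w x p.
Proof.
move=> xyp; apply: ge_inf; last by exists p.
by exists 0 => _ [q /andP[pq _] <-]; apply: wlen_ge0.
Qed.

Lemma le_dist x y a :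
  (forall p, walk e x y p -> a <= wlen w x p) -> a <= dist e w x y.
Proof.
move=> a_lb; apply: lb_le_inf; last by move=> _ [p xyp <-]; apply: a_lb.
by have [p xyp] := e_connected x y; exists (wlen w x p), p.
Qed.

Lemma dist_triangle x y z : dist e w x z <= dist e w x y + dist e w y z.
Proof.
rewrite -lerBlDr; apply: le_dist => p xyp; rewrite lerBlDl -lerBlDr.
apply: le_dist => q yzq; rewrite lerBlDl.
have <- : last x p = y by case/andP: xyp => _ /eqP.
by rewrite -wlen_cat dist_le_wlen // (walk_cat xyp yzq).
Qed.

Hypothesis e_sym : symmetric e.
Hypothesis e_acyclic : acyclic e.

Lemma dist_split_tree_path s v u p : walk e s v p -> uniq (s :: p) ->
  u \in s :: p -> dist e w s u + dist e w u v <= dist e w s v.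
Proof.
move=> svp up u_p; apply: le_dist => q svq.
have u_q := tree_path_subset_walk e_sym e_acyclic svp up svq u_p.
case/splitPl: u_q svq => q1 q2 lq1 /andP[].
rewrite cat_path last_cat lq1 => /andP[pq1 pq2] lq2.
by rewrite wlen_cat lq1 lerD // dist_le_wlen // /walk ?pq1 ?pq2 ?lq1 ?lq2 ?eqxx.
Qed.

Lemma dist_sub_tree_path s s' v u p : walk e s v p -> uniq (s :: p) ->
  u \in s :: p -> dist e w s u - dist e w s' u <= dist e w s v - dist e w s' v.
Proof.
move=> svp up u_p.
have := dist_split_tree_path svp up u_p; have := dist_triangle s' u v.
lra.
Qed.

End Distance.

Theorem lemma2 (R : realType) (V : finType) (e : rel V) (w : V -> V -> R)
  (Sigma : {set V}) (s : V) :
  is_tree e -> pos_lengths e w -> s \in Sigma ->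
  (forall (v : V) (p : seq V),
     v \in cell e w Sigma s -> walk e s v p -> uniq (s :: p) ->
     (forall u, u \in s :: p -> u \in cell e w Sigma s)) /\
  (forall (v : V) (p : seq V),
     v \in cell_strict e w Sigma s -> walk e s v p -> uniq (s :: p) ->
     (forall u, u \in s :: p -> u \in cell_strict e w Sigma s)).
Proof.
move=> [e_sym [_ [e_connected e_acyclic]]] [_ w_pos] _.
have w_ge0 x y : e x y -> 0 <= w x y by move/w_pos/ltW.
have dist_sub := dist_sub_tree_path w_ge0 e_connected e_sym e_acyclic.
split=> v p; rewrite inE => /forallP v_cell svp up u u_p; rewrite inE;
  apply/forallP => s'; apply/implyP => s'_Sigma;
  have := implyP (v_cell s') s'_Sigma; have := dist_sub s s' v u p svp up u_p;
  lra.
Qed.
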